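(* Let $C=\langle A,G\rangle$ be a contract over a fixed vector of typed state variables $\vec{s}$ and a fixed vector of typed input variables $\vec{i}$, with assumption $A=\langle A_I,A_T\rangle$ and guarantee $G=\langle G_I,G_T\rangle$. Then $C$ is realizable if and only if \[ \forall \vec{i}.\; A_I[\vec{i}] \Rightarrow \exists \vec{s}.\; \big(G_I[\vec{s},\vec{i}] \land \mathit{Viable}_C(\vec{s})\big). \]
   Context: Fix a vector $\vec{s}$ of typed state variables and a vector $\vec{i}$ of typed input variables; a state is a type-consistent valuation of $\vec{s}$ and an input is a type-consistent valuation of $\vec{i}$. Primed vectors $\vec{s}',\vec{i}'$ denote renamed copies used for next-step values. Predicates are formulas over the indicated variables, interpreted as relations on valuations. A transition system $S=\langle \vec{s},\vec{i},I,T\rangle$ consists of an initial predicate $I[\vec{s},\vec{i}]$ and a transition predicate $T[\vec{s},\vec{i}',\vec{s}']$. A contract is a pair $C=\langle A,G\rangle$ with: - an assumption $A=\langle A_I,A_T\rangle$, where $A_I[\vec{i}]$ is a predicate over the inputs and $A_T[\vec{s},\vec{i}']$ is a predicate over the current state and the next inputs; - a guarantee $G=\langle G_I,G_T\rangle$, where $G_I[\vec{s},\vec{i}]$ and $G_T[\vec{s},\vec{i}',\vec{s}']$ are predicates. In particular, $G$ is itself a transition system with the same state and input variables. Reachable states under an assumption: for a transition system $S=\langle \vec{s},\vec{i},I,T\rangle$ and an assumption $A$, the set $\mathit{Reachable}_{S,A}$ is the least set of states such that: - every state $\vec{s}$ for which there is an input $\vec{i}_0$ with $A_I[\vec{i}_0]\land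 I[\vec{s},\vec{i}_0]$ belongs to it; and - whenever $\vec{s}_p\in\mathit{Reachable}_{S,A}$ and $A_T[\vec{s}_p,\vec{i}']\land T[\vec{s}_p,\vec{i}',\vec{s}]$ hold, then $\vec{s}\in\mathit{Reachable}_{S,A}$. $S$ satisfies $C$ if both of the following hold: 1. $\forall\vec{s},\vec{i}.\; A_I[\vec{i}]\land I[\vec{s},\vec{i}]\Rightarrow G_I[\vec{s},\vec{i}]$; 2. $\forall \vec{s},\vec{i}',\vec{s}'.\; \mathit{Reachable}_{S,A}(\vec{s})\land A_T[\vec{s},\vec{i}']\land T[\vec{s},\vec{i}',\vec{s}']\Rightarrow G_T[\vec{s},\vec{i}',\vec{s}']$. $S$ is input-enabled under $A$ if both of the following hold: 1. $\forall\vec{i}.\; A_I[\vec{i}]\Rightarrow\exists\vec{s}.\, I[\vec{s},\vec{i}]$; 2. $\forall\vec{s},\vec{i}'.\; \mathit{Reachable}_{S,A}(\vec{s})\land A_T[\vec{s},\vec{i}']\Rightarrow\exists\vec{s}'.\,T[\vec{s},\vec{i}',\vec{s}']$. $S$ is a realization of $C$ if $S$ satisfies $C$ and is input-enabled under $A$. The contract $C$ is realizable if there exists a transition system over the same state variables $\vec{s}$ and input variables $\vec{i}$ that is a realization of $C$. Viable states: $\mathit{Viable}_C$ is the greatest (coinductively defined) set of states satisfying \[ \mathit{Viable}_C(\vec{s}) \iff \forall \vec{i}'.\; A_T[\vec{s},\vec{i}']\Rightarrow \exists \vec{s}'.\; G_T[\vec{s},\vec{i}',\vec{s}']\land \mathit{Viable}_C(\vec{s}').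 \] Informally, these are the states from which $G_T$ can keep responding to valid inputs forever. *)

Record transition_system (St In : Type) := TS {
  ts_init  : St -> In -> Prop;
  ts_trans : St -> In -> St -> Prop
}.
Arguments TS {St In}.
Arguments ts_init {St In}.
Arguments ts_trans {St In}.

Record assumption (St In : Type) := Assum {
  A_I : In -> Prop;
  A_T : St -> In -> Prop
}.
Arguments Assum {St In}.
Arguments A_I {St In}.
Arguments A_T {St In}.

Definition guarantee (St In : Type) := transition_system St In.

Record contract (St In : Type) := Contract {
  c_assum : assumption St In;
  c_guar  : guarantee St In
}.
Arguments Contract {St In}.
Arguments c_assum {St In}.
Arguments c_guar {St In}.

Inductive Reachable {St In : Type} (S : transition_system St In)
    (A : assumption St In) : St -> Prop :=
| reach_init : forall s i0, A_I A i0 -> ts_init S s i0 -> Reachable S A s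
| reach_step : forall sp i' s, Reachable S A sp -> A_T A sp i' ->
    ts_trans S sp i' s -> Reachable S A s.

Definition satisfies {St In : Type} (S : transition_system St In)
    (C : contract St In) : Prop :=
  let A := c_assum C in let G := c_guar C in
  (forall s i, A_I A i -> ts_init S s i -> ts_init G s i) /\
  (forall s i' s', Reachable S A s -> A_T A s i' -> ts_trans S s i' s' ->
      ts_trans G s i' s').

Definition input_enabled {St In : Type} (S : transition_system St In)
    (A : assumption St In) : Prop :=
  (forall i, A_I A i -> exists s, ts_init S s i) /\
  (forall s i', Reachable S A s -> A_T A s i' -> exists s', ts_trans S s i' s').

Definition realization {St In : Type} (S : transition_system St In)
    (C : contract St In) : Prop :=
  satisfies S C /\ input_enabled S (c_assum C).

Definition realizable {St In : Type} (C : contract St In) : Prop :=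
  exists S : transition_system St In, realization S C.

CoInductive Viable {St In : Type} (C : contract St In) (s : St) : Prop :=
| viable_intro :
    (forall i', A_T (c_assum C) s i' ->
       exists s', ts_trans (c_guar C) s i' s' /\ Viable C s') ->
    Viable C s.


(* Necessity: along the reachable states of a realization the system itself
   keeps producing guarantee steps, so every reachable state is viable.
   Sufficiency: the guarantee restricted to viable states is a realization,
   because viability is exactly the promise that a viable successor exists. *)

Section Contract.

Variables (St In : Type) (C : contract St In).

Lemma reachable_viable (S : transition_system St In) :
  realization S C -> forall s, Reachable S (c_assum C) s -> Viable C s.
Proof.
  intros [[_ HT] [_ ET]]. cofix CIH. intros s Hr. constructor. intros i' Ha.
  destruct (ET s i' Hr Ha) as [s' Ht].
  exists s'. split.
  - exact (HT _ _ _ Hr Ha Ht).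
  - apply CIH. exact (reach_step _ _ _ _ _ Hr Ha Ht).
Qed.

Definition viable_guarantee : transition_system St In :=
  TS (fun s i => ts_init (c_guar C) s i /\ Viable C s)
     (fun s i' s' => ts_trans (c_guar C) s i' s' /\ Viable C s').

Lemma viable_guarantee_reachable_viable (s : St) :
  Reachable viable_guarantee (c_assum C) s -> Viable C s.
Proof. induction 1 as [s i0 _ [_ V] | sp i' s _ _ _ [_ V]]; exact V. Qed.

Lemma viable_guarantee_realization :
  (forall i, A_I (c_assum C) i -> exists s, ts_init (c_guar C) s i /\ Viable C s) ->
  realization viable_guarantee C.
Proof.
  intros HI. split; split; simpl.
  - intros s i _ [G _]. exact G.
  - intros s i' s' _ _ [G _]. exact G.
  - exact HI.
  - intros s i' Hr Ha.
    destruct (viable_guarantee_reachable_viable s Hr) as [V].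
    exact (V i' Ha).
Qed.

End Contract.

Arguments reachable_viable {St In C S}.
Arguments viable_guarantee {St In}.
Arguments viable_guarantee_realization {St In C}.

Theorem theorem1 (St In : Type) (C : contract St In) :
  realizable C <->
  (forall i : In, A_I (c_assum C) i ->
     exists s : St, ts_init (c_guar C) s i /\ Viable C s).
Proof.
  split.
  - intros [S HS] i Hi.
    pose proof HS as [[HI _] [EI _]].
    destruct (EI i Hi) as [s Hs].
    exists s. split.
    + exact (HI _ _ Hi Hs).
    + exact (reachable_viable HS s (reach_init _ _ _ _ Hi Hs)).
  - intros HI. exists (viable_guarantee C).
    exact (viable_guarantee_realization HI).
Qed.
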